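(* Let $P\in\mathbb{R}^{m\times m}$ be symmetric, stochastic and positive semidefinite, let $\mathcal{X}\subseteq\mathbb{R}^n$ be a closed convex set, let $p\ge1$ and $\sigma=\min\{1,n^{\frac2p-1}\}$. Then for all $\bm{u}=[u_1^\top,\dots,u_m^\top]^\top$ and $\bm{v}=[v_1^\top,\dots,v_m^\top]^\top$ in $\mathcal{X}^m$, $$\big\|((I_m-P)\otimes I_n)\bm{u}\big\|_2^2\le\frac1\sigma\sum_{i,j=1}^mP_{ij}\|v_i-u_j\|_p^2.$$
   Context: $\otimes$ denotes the Kronecker product, $I_k$ the $k\times k$ identity, $\|\cdot\|_p$ the $\ell_p$-norm. Stochastic means nonnegative entries with row sums 1. *)

From HB Require Import structures.
From mathcomp Require Import all_boot all_order all_algebra.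
From mathcomp Require Import all_classical all_reals all_analysis.
From mathcomp Require Export mxtens.
Set Implicit Arguments. Unset Strict Implicit. Unset Printing Implicit Defensive.
Import Order.TTheory GRing.Theory Num.Theory.
Import numFieldNormedType.Exports.
Local Open Scope ring_scope.
Local Open Scope classical_set_scope.

Definition lpnorm {R : realType} {n : nat} (p : R) (x : 'cV[R]_n) : R :=
  (\sum_(k < n) `|x k 0| `^ p) `^ p^-1.

Definition stochastic {R : realType} {m : nat} (P : 'M[R]_m) : Prop :=
  (forall i j, 0 <= P i j) /\ (forall i, \sum_(j < m) P i j = 1).

Definition symmetric_mx {R : realType} {m : nat} (P : 'M[R]_m) : Prop :=
  P^T = P.

Definition psd_mx {R : realType} {m : nat} (P : 'M[R]_m) : Prop :=
  forall x : 'cV[R]_m, 0 <= (x^T *m P *m x) 0 0.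

(* Stacked vector [u_1^T, ..., u_m^T]^T in R^(m n); block i is u_i
   (coordinate (i,k) is at index i*n + k, matching the Kronecker product
   convention of tensmx from mathcomp real_closed mxtens). *)
Definition stack {R : realType} {m n : nat} (u : 'I_m -> 'cV[R]_n)
  : 'cV[R]_(m * n) :=
  \col_k u (mxtens_unindex k).1 (mxtens_unindex k).2 0.

(* Work coordinate by coordinate: put y := ((u_j)_l)_j, z := ((v_i)_l)_i and
   Q := I - P.  Then |Q y|^2 = y'y - 2 y'Py + y'P^2y <= y'y - y'P^2y, because
   P - P^2 = QPQ + PQP is positive semidefinite (Q is a graph Laplacian, hence
   positive semidefinite too).  Next, y'y - y'P^2y = sum_i (sum_j P_ij y_j^2 -
   (Py)_i^2) is a sum of P-weighted variances, each at most the weighted mean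
   square deviation sum_j P_ij (z_i - y_j)^2 from an arbitrary point z_i.
   Summing over l gives sum_ij P_ij |v_i - u_j|_2^2, and finally
   |x|_2^2 <= |x|_p^2 / sigma: for p <= 2 by superadditivity of t |-> t^(2/p),
   for p > 2 by the power mean inequality, obtained by summing the tangent lines
   of t |-> t^(p/2) at the mean. *)

From HB Require Import structures.
From mathcomp Require Import all_boot all_order all_algebra.
From mathcomp Require Import all_classical all_reals all_analysis.
From mathcomp Require Import mxtens.
From mathcomp Require Import ring lra.
Set Implicit Arguments. Unset Strict Implicit. Unset Printing Implicit Defensive.
Import Order.TTheory GRing.Theory Num.Theory.
Import numFieldNormedType.Exports.
Local Open Scope ring_scope.
Local Open Scope classical_set_scope.

Section PowerSums.
Variable R : realType.

Lemma sum_powR_le_powR_sum (I : finType) (a : I -> R) (s : R) :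
  (forall k, 0 <= a k) -> 1 <= s ->
  \sum_k a k `^ s <= (\sum_k a k) `^ s.
Proof.
move=> a_ge0 s_ge1; set S := \sum_k a k.
have S_ge0 : 0 <= S by exact: sumr_ge0.
have a_leS k : a k <= S.
  by rewrite /S (bigD1 k) //= lerDl sumr_ge0.
have s_gt0 : 0 < s by lra.
rewrite -(mulr_powRB1 S_ge0 s_gt0) mulr_suml; apply: ler_sum => k _.
rewrite -(mulr_powRB1 (a_ge0 k) s_gt0) ler_wpM2l //.
by apply: ge0_ler_powR; rewrite ?nnegrE //; lra.
Qed.

Lemma powR_tangent_le (r mu t : R) : 1 < r -> 0 < mu -> 0 <= t ->
  r * mu `^ (r - 1) * t <= t `^ r + (r - 1) * mu `^ r.
Proof.
move=> r_gt1 mu_gt0 t_ge0.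
have r_neq0 : r != 0 by lra.
have r1_neq0 : r - 1 != 0 by lra.
have r_gt0 : 0 < r by lra.
set q := r / (r - 1).
have q_gt0 : 0 < q by rewrite divr_gt0 //; lra.
have conj_rq : r^-1 + q^-1 = 1.
  by rewrite /q invf_div; field; rewrite ?r_neq0 ?r1_neq0.
have := conjugate_powR t_ge0 (powR_ge0 mu (r - 1)) r_gt0 q_gt0 conj_rq.
rewrite -powRrM (_ : (r - 1) * q = r); last by rewrite /q; field; rewrite ?r_neq0 ?r1_neq0.
have -> : t `^ r + (r - 1) * mu `^ r = r * (t `^ r / r + mu `^ r / q).
  by rewrite /q; field; rewrite ?r_neq0 ?r1_neq0.
by rewrite -mulrA [_ * t]mulrC ler_pM2l.
Qed.

Lemma powR_mean_le n (b : 'I_n.+1 -> R) (r : R) :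
  (forall k, 0 <= b k) -> 1 < r ->
  ((\sum_k b k) / n.+1%:R) `^ r <= (\sum_k b k `^ r) / n.+1%:R.
Proof.
move=> b_ge0 r_gt1; set N := n.+1%:R; set mu := (\sum_k b k) / N.
have N_gt0 : 0 < N by [].
have r_gt0 : 0 < r by lra.
have sumb_ge0 : 0 <= \sum_k b k by exact: sumr_ge0.
have sumbr_ge0 : 0 <= \sum_k b k `^ r by apply: sumr_ge0 => k _; exact: powR_ge0.
have [mu0|mu_neq0] := eqVneq mu 0.
  by rewrite mu0 powR0 ?gt_eqF // divr_ge0 // ltW.
have mu_gt0 : 0 < mu by rewrite lt_def mu_neq0 divr_ge0 // ltW.
have sumbE : \sum_k b k = N * mu by rewrite /mu mulrC divfK ?gt_eqF.
have tangent : \sum_k r * mu `^ (r - 1) * b k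
               <= \sum_k (b k `^ r + (r - 1) * mu `^ r).
  by apply: ler_sum => k _; exact: powR_tangent_le.
rewrite -mulr_sumr sumbE big_split /= sumr_const card_ord -mulr_natl -/N in tangent.
have powE : mu `^ (r - 1) * (N * mu) = N * mu `^ r.
  by rewrite mulrCA [_ * mu]mulrC mulr_powRB1 // ltW.
rewrite -mulrA powE in tangent.
rewrite ler_pdivlMr //; lra.
Qed.

Lemma sqr_powR_norm (a : R) : a ^+ 2 = `|a| `^ 2.
Proof. by rewrite -[2]/(2%:R) powR_mulrn // real_normK // num_real. Qed.

End PowerSums.

Section LpNorm.
Variable R : realType.
Implicit Types (n : nat) (p : R).

Lemma lpnorm_sqr n p (x : 'cV[R]_n) : 0 < p ->
  lpnorm p x ^+ 2 = (\sum_k `|x k 0| `^ p) `^ (2 / p).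
Proof.
by move=> p_gt0; rewrite /lpnorm -powR_mulrn ?powR_ge0 // -powRrM mulrC.
Qed.

Lemma lpnorm2_sqr n (x : 'cV[R]_n) : lpnorm 2 x ^+ 2 = \sum_k x k 0 ^+ 2.
Proof.
rewrite lpnorm_sqr // divff // powRr1; last by apply: sumr_ge0 => k _; exact: powR_ge0.
by apply: eq_bigr => k _; rewrite sqr_powR_norm.
Qed.

Lemma sqr_as_powR (a : R) p : 0 < p -> a ^+ 2 = (`|a| `^ p) `^ (2 / p).
Proof. by move=> p_gt0; rewrite -powRrM mulrC divfK ?gt_eqF // sqr_powR_norm. Qed.

Lemma sum_sqr_le_lpnorm_sqr n p (x : 'cV[R]_n) : 1 <= p <= 2 ->
  \sum_k x k 0 ^+ 2 <= lpnorm p x ^+ 2.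
Proof.
move=> /andP[p_ge1 p_le2]; have p_gt0 : 0 < p by lra.
rewrite lpnorm_sqr // (eq_bigr _ (fun k _ => sqr_as_powR (x k 0) p_gt0)).
apply: sum_powR_le_powR_sum => [k|]; first exact: powR_ge0.
by rewrite ler_pdivlMr // mul1r.
Qed.

Lemma sum_sqr_le_lpnorm_sqr_gt2 n p (x : 'cV[R]_n) : 2 < p ->
  \sum_k x k 0 ^+ 2 <= n%:R `^ (1 - 2 / p) * lpnorm p x ^+ 2.
Proof.
move=> p_gt2; have p_gt0 : 0 < p by lra.
case: n x => [|n'] x; first by rewrite big_ord0 mulr_ge0 ?powR_ge0 ?sqr_ge0.
set N := n'.+1%:R; set S := \sum_k `|x k 0| `^ p.
have N_gt0 : 0 < N by [].
have S_ge0 : 0 <= S by apply: sumr_ge0 => k _; exact: powR_ge0.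
have r_gt1 : 1 < p / 2 by rewrite ltr_pdivlMr // mul1r.
have mean := powR_mean_le (fun k => sqr_ge0 (x k 0)) r_gt1.
have sqrE k : (x k 0 ^+ 2) `^ (p / 2) = `|x k 0| `^ p.
  by rewrite sqr_powR_norm -powRrM mulrC divfK.
rewrite (eq_bigr _ (fun k _ => sqrE k)) -/S -/N in mean.
have T_ge0 : 0 <= \sum_k x k 0 ^+ 2 by apply: sumr_ge0 => k _; exact: sqr_ge0.
have pE : p / 2 * (2 / p) = 1 by field; rewrite gt_eqF.
have {}mean : (\sum_k x k 0 ^+ 2) / N <= (S / N) `^ (2 / p).
  have := ge0_ler_powR (r := 2 / p) _ _ _ mean.
  rewrite -powRrM pE powRr1; last by rewrite divr_ge0 // ltW.
  by apply; rewrite ?nnegrE ?powR_ge0 ?divr_ge0 // ltW.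
rewrite ler_pdivrMr // in mean.
have SNE : (S / N) `^ (2 / p) = S `^ (2 / p) / N `^ (2 / p).
  rewrite powRM ?invr_ge0 ?(ltW N_gt0) // -[N^-1]powR_inv1 ?(ltW N_gt0) //.
  by rewrite -powRrM mulN1r powRN.
have NE : N `^ (1 - 2 / p) = N / N `^ (2 / p).
  by rewrite powRB ?(gt_eqF N_gt0) ?implybT // powRr1 // ltW.
suff -> : N `^ (1 - 2 / p) * lpnorm p x ^+ 2 = (S / N) `^ (2 / p) * N by [].
by rewrite lpnorm_sqr // -/S NE SNE; ring.
Qed.

Lemma sum_sqr_le_lpnorm_sqr_min n p (x : 'cV[R]_n) : 1 <= p ->
  \sum_k x k 0 ^+ 2 <= (Num.min 1 (n%:R `^ (2 / p - 1)))^-1 * lpnorm p x ^+ 2.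
Proof.
move=> p_ge1; have p_gt0 : 0 < p by lra.
case: n x => [|n] x.
  by rewrite big_ord0 mulr_ge0 ?sqr_ge0 // invr_ge0 le_min ler01 powR_ge0.
have N_ge1 : 1 <= n.+1%:R :> R by rewrite ler1n.
have [p_le2|p_gt2] := lerP p 2.
  rewrite min_l ?invr1 ?mul1r; first by apply: sum_sqr_le_lpnorm_sqr; rewrite p_ge1.
  rewrite -[leLHS](powRr0 n.+1%:R) ler_powR // subr_ge0.
  by rewrite ler_pdivlMr // mul1r.
rewrite min_r -?powRN ?opprB; first exact: sum_sqr_le_lpnorm_sqr_gt2.
rewrite -[leRHS](powRr0 n.+1%:R) ler_powR // subr_le0.
by rewrite ler_pdivrMr // mul1r ltW.
Qed.

End LpNorm.

Lemma weighted_sqr_dev_ge (R : realFieldType) (I : finType) (w y : I -> R) (z : R) :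
  \sum_j w j = 1 ->
  \sum_j w j * y j ^+ 2 - (\sum_j w j * y j) ^+ 2 <= \sum_j w j * (z - y j) ^+ 2.
Proof.
move=> w_sum1; set mu := \sum_j w j * y j.
have -> : \sum_j w j * (z - y j) ^+ 2
          = z ^+ 2 * \sum_j w j - 2 * z * mu + \sum_j w j * y j ^+ 2.
  by rewrite /mu !mulr_sumr -sumrB -big_split /=; apply: eq_bigr => j _; ring.
by rewrite w_sum1 mulr1; have := sqr_ge0 (z - mu); lra.
Qed.

Section QuadraticForm.
Variables (R : realType) (m : nat).
Implicit Types (M N A P : 'M[R]_m) (x y z : 'cV[R]_m).

Definition qform M x : R := (x^T *m M *m x) 0 0.

Lemma qformE M x : qform M x = \sum_i \sum_j x i 0 * M i j * x j 0.
Proof.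
rewrite /qform mxE exchange_big /=; apply: eq_bigr => j _.
by rewrite mxE mulr_suml; apply: eq_bigr => i _; rewrite mxE.
Qed.

Lemma qformD M N x : qform (M + N) x = qform M x + qform N x.
Proof. by rewrite /qform mulmxDr mulmxDl mxE. Qed.

Lemma qformN M x : qform (- M) x = - qform M x.
Proof. by rewrite /qform mulmxN mulNmx mxE. Qed.

Lemma qformB M N x : qform (M - N) x = qform M x - qform N x.
Proof. by rewrite qformD qformN. Qed.

Lemma qform1 x : qform 1%:M x = \sum_i x i 0 ^+ 2.
Proof. by rewrite /qform mulmx1 mxE; apply: eq_bigr => i _; rewrite mxE expr2. Qed.

Lemma qform_mulmx M A x : qform M (A *m x) = qform (A^T *m M *m A) x.
Proof. by rewrite /qform trmx_mul !mulmxA. Qed.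

Lemma stochastic_colsum P : symmetric_mx P -> stochastic P ->
  forall j, \sum_i P i j = 1.
Proof.
move=> P_sym [_ P_rowsum] j; rewrite -(P_rowsum j).
by apply: eq_bigr => i _; rewrite -{1}P_sym mxE.
Qed.

Lemma laplacian_qformE P x : symmetric_mx P -> stochastic P ->
  qform (1%:M - P) x = 2^-1 * \sum_i \sum_j P i j * (x i 0 - x j 0) ^+ 2.
Proof.
move=> P_sym P_stoch; have [_ P_rowsum] := P_stoch.
have P_colsum := stochastic_colsum P_sym P_stoch.
have rowE : \sum_i \sum_j P i j * x i 0 ^+ 2 = qform 1%:M x.
  by rewrite qform1; apply: eq_bigr => i _; rewrite -mulr_suml P_rowsum mul1r.
have colE : \sum_i \sum_j P i j * x j 0 ^+ 2 = qform 1%:M x.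
  by rewrite qform1 exchange_big; apply: eq_bigr => j _; rewrite -mulr_suml P_colsum mul1r.
have -> : \sum_i \sum_j P i j * (x i 0 - x j 0) ^+ 2 =
    \sum_i \sum_j P i j * x i 0 ^+ 2 + \sum_i \sum_j P i j * x j 0 ^+ 2
    - 2 * qform P x.
  rewrite qformE mulr_sumr -!big_split -sumrB; apply: eq_bigr => i _ /=.
  rewrite mulr_sumr -!big_split -sumrB; apply: eq_bigr => j _ /=; ring.
by rewrite rowE colE qformB; field.
Qed.

Lemma laplacian_psd P : symmetric_mx P -> stochastic P -> psd_mx (1%:M - P).
Proof.
move=> P_sym P_stoch x; rewrite -/(qform _ x) laplacian_qformE //.
rewrite mulr_ge0 ?invr_ge0 // !sumr_ge0 // => i _; apply: sumr_ge0 => j _.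
by rewrite mulr_ge0 ?sqr_ge0 //; case: P_stoch.
Qed.

End QuadraticForm.

Section SymmetricStochastic.
Variables (R : realType) (m : nat) (P : 'M[R]_m).
Hypotheses (P_sym : symmetric_mx P) (P_stoch : stochastic P) (P_psd : psd_mx P).
Implicit Types (y z : 'cV[R]_m).

Let Q := 1%:M - P.

Let trQ : Q^T = Q.
Proof. by rewrite /Q linearB /= trmx1 P_sym. Qed.

Lemma qform_sqr_le y : qform (P *m P) y <= qform P y.
Proof.
have PQE : P - P *m P = Q^T *m P *m Q + P^T *m Q *m P.
  rewrite trQ P_sym /Q !(mulmxBl, mulmxBr, mulmx1, mul1mx).
  by rewrite subrK.
rewrite -subr_ge0 -qformB PQE qformD -!qform_mulmx.
by rewrite addr_ge0 //; [exact: P_psd | exact: laplacian_psd].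
Qed.

Lemma qform_id_sub_sqr_le y z :
  qform 1%:M y - qform (P *m P) y <= \sum_i \sum_j P i j * (z i 0 - y j 0) ^+ 2.
Proof.
have [_ P_rowsum] := P_stoch.
have idE : qform 1%:M y = \sum_i \sum_j P i j * y j 0 ^+ 2.
  rewrite qform1 exchange_big; apply: eq_bigr => j _.
  by rewrite -mulr_suml stochastic_colsum // mul1r.
have sqrE : qform (P *m P) y = \sum_i (\sum_j P i j * y j 0) ^+ 2.
  have -> : P *m P = P^T *m 1%:M *m P by rewrite mulmx1 P_sym.
  by rewrite -qform_mulmx qform1; apply: eq_bigr => i _; rewrite mxE.
rewrite idE sqrE -sumrB; apply: ler_sum => i _.
exact: weighted_sqr_dev_ge.
Qed.

Lemma sum_sqr_laplacian_le y z :
  \sum_i (Q *m y) i 0 ^+ 2 <= \sum_i \sum_j P i j * (z i 0 - y j 0) ^+ 2.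
Proof.
have normE : \sum_i (Q *m y) i 0 ^+ 2
             = qform 1%:M y - 2 * qform P y + qform (P *m P) y.
  rewrite -qform1 qform_mulmx trQ mulmx1 {1}/Q mulmxBl mul1mx mulmxBr mulmx1.
  by rewrite /Q !qformB; lra.
rewrite normE; have := qform_sqr_le y; have := qform_id_sub_sqr_le y z.
lra.
Qed.

End SymmetricStochastic.

Lemma sum_mxtens_index (V : nmodType) m n (F : 'I_(m * n) -> V) :
  \sum_k F k = \sum_i \sum_l F (mxtens_index (i, l)).
Proof.
rewrite pair_big (reindex (@mxtens_index m n)) /=; last first.
  by exists (@mxtens_unindex m n) => k _; rewrite (mxtens_indexK, mxtens_unindexK).
by apply: eq_bigr => -[i l].
Qed.

Lemma tensmx1_mul_stack (R : realType) m n (A : 'M[R]_m) (u : 'I_m -> 'cV[R]_n) i l :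
  (tensmx A (1%:M : 'M[R]_n) *m stack u) (mxtens_index (i, l)) 0
  = (A *m \col_j u j l 0) i 0.
Proof.
rewrite !mxE sum_mxtens_index; apply: eq_bigr => j _.
rewrite (bigD1 l) //= big1 => [|l' l'_neq]; rewrite tensmxE !mxE mxtens_indexK.
  by rewrite eqxx mulr1 addr0.
by rewrite eq_sym (negbTE l'_neq) mulr0 mul0r.
Qed.

Theorem lemma3 (R : realType) (m n : nat) (P : 'M[R]_m) (X : set 'cV[R]_n)
  (p : R) :
  symmetric_mx P -> stochastic P -> psd_mx P ->
  closed X -> convex_set X -> 1 <= p ->
  let sigma := Num.min 1 (n%:R `^ (2 / p - 1)) in
  forall u v : 'I_m -> 'cV[R]_n,
    (forall i, X (u i)) -> (forall i, X (v i)) ->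
    lpnorm 2 (tensmx (1%:M - P) (1%:M : 'M[R]_n) *m stack u) ^+ 2
    <= sigma^-1 * \sum_(i < m) \sum_(j < m) P i j * lpnorm p (v i - u j) ^+ 2.
Proof.
move=> P_sym P_stoch P_psd _ _ p_ge1 sigma u v _ _.
rewrite lpnorm2_sqr sum_mxtens_index exchange_big /=.
under eq_bigr do under eq_bigr do rewrite tensmx1_mul_stack.
apply: (@le_trans _ _ (\sum_l \sum_i \sum_j P i j * (v i l 0 - u j l 0) ^+ 2)).
  apply: ler_sum => l _.
  have := sum_sqr_laplacian_le P_sym P_stoch P_psd (\col_j u j l 0) (\col_i v i l 0).
  by under [in rhs in _ <= rhs -> _]eq_bigr do under eq_bigr do rewrite !mxE.
rewrite exchange_big mulr_sumr; apply: ler_sum => i _.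
rewrite exchange_big mulr_sumr; apply: ler_sum => j _ /=.
rewrite -mulr_sumr mulrCA ler_wpM2l //; first by case: P_stoch.
have := sum_sqr_le_lpnorm_sqr_min (v i - u j) p_ge1.
by under eq_bigr do rewrite !mxE.
Qed.
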